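(* Let $V$ be a vertex algebra, $g$ an automorphism of $V$ of finite order $T$, $W$ a $g$-twisted $\phi$-coordinated $V$-module and $U\subseteq W$ a subset. Then the submodule $\langle U\rangle$ generated by $U$ (the smallest submodule of $W$ containing $U$) equals $\mathrm{span}\{v_nw: v\in V,\ n\in(1/T)\mathbb Z,\ w\in U\}$.
   Context: $V$ is a vertex algebra with vacuum $\mathbf 1$, $Y(v,x)=\sum_{k\in\mathbb Z}v_kx^{-k-1}$; $g$ is an automorphism with $g^T=1$. A $g$-twisted $\phi$-coordinated $V$-module is a vector space $W$ with a linear map $Y_W(\cdot,x):V\to\mathrm{Hom}(W,W((x^{1/T})))$, $Y_W(v,x)=\sum_{n\in(1/T)\mathbb Z}v_nx^{-n-1}$, such that: (i) $Y_W(\mathbf 1,x)=\mathrm{id}_W$; (ii) $Y_W(gv,x)=\lim_{x^{1/T}\to\omega_T^{-1}x^{1/T}}Y_W(v,x)$ with $\omega_T=e^{-2\pi\sqrt{-1}/T}$; (iii) for $u,v\in V$ there is $k\in\mathbb N$ with $(x_1-x_2)^kY_W(u,x_1)Y_W(v,x_2)\in\mathrm{Hom}(W,W((x_1^{1/T},x_2^{1/T})))$ and $x_2^k(e^{x_0}-1)^kY_W(Y(u,x_0)v,x_2)=\big((x_1-x_2)^kY_W(u,x_1)Y_W(v,x_2)\big)|_{x_1^{1/T}=(x_2e^{x_0})^{1/T}}$ (where $x_1^{j/T}\mapsto x_2^{j/T}e^{jx_0/T}$). A submodule is a subspace invariant under all $v_n$. *)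

From HB Require Import structures.
From mathcomp Require Import all_boot all_order all_algebra.
From mathcomp Require Import algC.
Set Implicit Arguments. Unset Strict Implicit. Unset Printing Implicit Defensive.
Import Order.TTheory GRing.Theory Num.Theory.
Local Open Scope ring_scope.

Definition sumsN (W : lmodType algC) (f : nat -> W) (x : W) : Prop :=
  exists N : nat, forall M : nat, (N <= M)%N -> \sum_(i < M) f i = x.

(* [sumsZ f x] : the series sum_{i in Z} f i (finitely many nonzero
   terms) equals x. *)
Definition sumsZ (W : lmodType algC) (f : int -> W) (x : W) : Prop :=
  exists N : nat, forall M : nat, (N <= M)%N ->
    \sum_(i < (M + M).+1) f (i%:Z - M%:Z) = x.

Definition binz (m : int) (i : nat) : algC :=
  (\prod_(j < i) (m%:~R - j%:R)) / (i`!)%:R.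

(* omega_T = e^{-2 pi sqrt(-1)/T}:  T.-root (-1) = e^{pi sqrt(-1)/T}. *)
Definition omegaT (T : nat) : algC := ((T.-root (-1)) ^+ 2)^-1.

Definition ps := nat -> algC.
Definition ps_one : ps := fun n => if n == 0%N then 1 else 0.
Definition ps_mul (f g : ps) : ps := fun n => \sum_(i < n.+1) f i * g (n - i)%N.
Definition ps_pow (f : ps) (k : nat) : ps := iter k (ps_mul f) ps_one.
Definition ps_expm1 : ps := fun n => if n == 0%N then 0 else ((n`!)%:R)^-1.

(* Vertex algebras: Y(v,x) = sum_k v_k x^{-k-1},  v_k w = Y v k w      *)
Definition bilinear_modes (V W : lmodType algC) (Y : V -> int -> W -> W) : Prop :=
  (forall (a : algC) u1 u2 k w, Y (a *: u1 + u2) k w = a *: Y u1 k w + Y u2 k w) /\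
  (forall u k (a : algC) w1 w2, Y u k (a *: w1 + w2) = a *: Y u k w1 + Y u k w2).

Definition truncated_modes (V W : lmodType algC) (Y : V -> int -> W -> W) : Prop :=
  forall v w, exists N : int, forall k : int, N <= k -> Y v k w = 0.

Definition borcherds (V : lmodType algC) (Y : V -> int -> V -> V) : Prop :=
  forall (u v w : V) (m n l : int), exists x : V,
    sumsN (fun i => binz m i *: Y (Y u (l + i%:Z) v) (m + n - i%:Z) w) x /\
    sumsN (fun i => ((-1) ^+ i * binz l i) *:
              (Y u (m + l - i%:Z) (Y v (n + i%:Z) w)
               - ((-1) ^ l) *: Y v (n + l - i%:Z) (Y u (m + i%:Z) w))) x.

Definition is_vertex_algebra (V : lmodType algC) (one : V)
    (Y : V -> int -> V -> V) : Prop :=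
  [/\ bilinear_modes Y /\ truncated_modes Y,
      (forall k v, Y one k v = if k == -1 then v else 0),
      (forall v k, 0 <= k -> Y v k one = 0),
      (forall v, Y v (-1) one = v) &
      borcherds Y].

Definition is_VA_automorphism (V : lmodType algC) (one : V)
    (Y : V -> int -> V -> V) (g : V -> V) : Prop :=
  [/\ (forall (a : algC) u v, g (a *: u + v) = a *: g u + g v),
      bijective g, g one = one &
      (forall u k v, g (Y u k v) = Y (g u) k (g v))].

(* YW v j w = v_{j/T} w, so Y_W(v,x) w = sum_{j in Z} (YW v j w) x^{-j/T-1}. *)

(* coefficient of x^{k/T} in Y_W(v,x) w *)
Definition coefW (V W : lmodType algC) (T : nat) (YW : V -> int -> W -> W)
    (v : V) (k : int) (w : W) : W :=
  YW v (- k - T%:Z) w.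

(* coefficient of x1^{i/T} x2^{j/T} in Y_W(u,x1) Y_W(v,x2) w *)
Definition prodcoef (V W : lmodType algC) (T : nat) (YW : V -> int -> W -> W)
    (u v : V) (w : W) (i j : int) : W :=
  coefW T YW u i (coefW T YW v j w).

(* coefficient of x1^{i/T} x2^{j/T} in (x1 - x2)^k Y_W(u,x1) Y_W(v,x2) w *)
Definition Pcoef (V W : lmodType algC) (T : nat) (YW : V -> int -> W -> W)
    (k : nat) (u v : V) (w : W) (i j : int) : W :=
  \sum_(l < k.+1) (('C(k, l))%:R * (-1) ^+ (k - l)%N) *:
      prodcoef T YW u v w (i - (l * T)%N%:Z) (j - ((k - l) * T)%N%:Z).

(* coefficient of x0^m in e^{i x0 / T}  (zero for m < 0) *)
Definition expcoef (T : nat) (i m : int) : algC :=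
  match m with
  | Posz n => ((i%:~R / T%:R) ^+ n) / (n`!)%:R
  | Negz _ => 0
  end.

Definition is_twisted_phi_module (V : lmodType algC) (one : V)
    (Y : V -> int -> V -> V) (g : V -> V) (T : nat)
    (W : lmodType algC) (YW : V -> int -> W -> W) : Prop :=
  [/\
    bilinear_modes YW, truncated_modes YW,
    (forall k w, coefW T YW one k w = if k == 0 then w else 0),
    (* (ii) Y_W(gv,x) = Y_W(v,x)|_{x^{1/T} -> omega_T^{-1} x^{1/T}} *)
    (forall v k w, coefW T YW (g v) k w = ((omegaT T)^-1 ^ k) *: coefW T YW v k w) &
    (forall u v : V, exists k : nat,
       (* (x1-x2)^k Y_W(u,x1)Y_W(v,x2) in Hom(W, W((x1^{1/T},x2^{1/T}))) *)
       (forall w : W, exists N : int, forall i j : int,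
          (i < N) || (j < N) -> Pcoef T YW k u v w i j = 0) /\
       (* coefficient of x2^{s/T} x0^m of
          x2^k (e^{x0}-1)^k Y_W(Y(u,x0)v,x2) w   and of
          ((x1-x2)^k Y_W(u,x1)Y_W(v,x2) w)|_{x1^{1/T} = (x2 e^{x0})^{1/T}} agree *)
       (forall (w : W) (s m : int), exists x : W,
          sumsN (fun r => ps_pow ps_expm1 k r *:
                   coefW T YW (Y u (r%:Z - m - 1) v) (s - (k * T)%N%:Z) w) x /\
          sumsZ (fun i => expcoef T i m *: Pcoef T YW k u v w i (s - i)) x))
  ].

Definition is_submodule (V W : lmodType algC) (YW : V -> int -> W -> W)
    (S : W -> Prop) : Prop :=
  [/\ S 0, (forall (a : algC) x y, S x -> S y -> S (a *: x + y)) &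
      (forall v j x, S x -> S (YW v j x))].

Definition generated_submodule (V W : lmodType algC) (YW : V -> int -> W -> W)
    (U : W -> Prop) : W -> Prop :=
  fun w => forall S, is_submodule YW S -> (forall u, U u -> S u) -> S w.

Definition span_of (W : lmodType algC) (A : W -> Prop) : W -> Prop :=
  fun w => exists s : seq (algC * W),
    (forall p, p \in s -> A p.2) /\ w = \sum_(p <- s) p.1 *: p.2.

(** The span of the [v_n u] ([u] in [U]) lies in every submodule containing
[U] and contains [U] by the vacuum axiom, so the point is that it is stable
under all modes: [a_b a'_b' w] must be a combination of modes applied to [w].
Weak associativity provides this.  Its right-hand side, for fixed [x2]-degree
[s] and [x0]-degree [m], is the finite moment sum [sum_i (i/T)^m/m! P(i, s-i)]
of the coefficients [P] of [(x1-x2)^k Y_W(a,x1)Y_W(a',x2) w]; its left-hand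
side is a combination of modes applied to [w].  As the nodes [i/T] are
distinct, a Vandermonde argument puts every [P(i,j)] in the span of the
[v_n w].  Finally [P] is unitriangular with respect to the coefficients of
[Y_W(a,x1)Y_W(a',x2) w], which vanish for small [x2]-degree by truncation, so
induction on that degree concludes. *)
From HB Require Import structures.
From mathcomp Require Import all_boot all_order all_algebra.
From mathcomp Require Import algC zify ring.
Set Implicit Arguments. Unset Strict Implicit. Unset Printing Implicit Defensive.
Import Order.TTheory GRing.Theory Num.Theory.
Local Open Scope ring_scope.

Definition subspace (R : pzRingType) (W : lmodType R) (S : W -> Prop) :=
  S 0 /\ forall (a : R) x y, S x -> S y -> S (a *: x + y).

Section Subspace.
Variables (R : pzRingType) (W : lmodType R) (S : W -> Prop).
Hypothesis S_subspace : subspace S.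

Lemma subspace0 : S 0. Proof. by case: S_subspace. Qed.

Lemma subspaceZ a x : S x -> S (a *: x).
Proof. by move=> Sx; rewrite -[_ *: _]addr0; apply: S_subspace.2 Sx subspace0. Qed.

Lemma subspaceD x y : S x -> S y -> S (x + y).
Proof. by move=> Sx Sy; rewrite -[x]scale1r; apply: S_subspace.2. Qed.

Lemma subspaceB x y : S x -> S y -> S (x - y).
Proof. by move=> Sx Sy; rewrite -scaleN1r addrC; apply: S_subspace.2. Qed.

Lemma subspace_sum (I : Type) (r : seq I) (P : pred I) (F : I -> W) :
  (forall i, P i -> S (F i)) -> S (\sum_(i <- r | P i) F i).
Proof. by apply: big_ind; [apply: subspace0 | apply: subspaceD]. Qed.

Lemma subspace_preim (W' : lmodType R) (f : W' -> W) :
    (forall a x y, f (a *: x + y) = a *: f x + f y) ->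
  subspace (fun x => S (f x)).
Proof.
move=> f_lin; have f0 : f 0 = 0.
  by apply: (addIr (f 0)); rewrite add0r -{1}[f 0]scale1r -f_lin scale1r addr0.
split=> [|a x y Sx Sy]; first by rewrite f0; apply: subspace0.
by rewrite f_lin; apply: S_subspace.2.
Qed.

End Subspace.

Section Vandermonde.
Variables (F : fieldType) (W : lmodType F) (S : W -> Prop).
Hypothesis S_subspace : subspace S.

Lemma subspace_unscale (a : F) x : a != 0 -> S (a *: x) -> S x.
Proof. by move=> a_neq0 /(subspaceZ S_subspace a^-1); rewrite scalerA mulVf ?scale1r. Qed.

Lemma subspace_vandermonde n (t : nat -> F) (p : nat -> W) :
    (forall a b, (a < n)%N -> (b < n)%N -> t a = t b -> a = b) ->
    (forall m, S (\sum_(i < n) t i ^+ m *: p i)) ->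
  forall i, (i < n)%N -> S (p i).
Proof.
elim: n t p => [|n IH] t p t_inj Spow i // lt_i_n1.
(* Multiplying the moments by [t i - t n] kills the last term. *)
have Slow j : (j < n)%N -> S (p j).
  move=> lt_j_n; have tjn_neq0 : t j - t n != 0.
    by rewrite subr_eq0; apply/eqP => /t_inj; lia.
  apply: subspace_unscale tjn_neq0 _.
  apply: (IH t (fun i => (t i - t n) *: p i)) lt_j_n => [a b lt_a lt_b|m].
    by apply: t_inj; apply: ltnW.
  have -> : \sum_(i < n) t i ^+ m *: ((t i - t n) *: p i) =
      \sum_(i < n.+1) t i ^+ m.+1 *: p i - t n *: \sum_(i < n.+1) t i ^+ m *: p i.
    rewrite scaler_sumr -sumrB big_ord_recr /= scalerA -exprS subrr addr0.
    by apply: eq_bigr => k _; rewrite !scalerA -scalerBl exprS; congr (_ *: _); ring.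
  by apply: (subspaceB S_subspace); [apply: Spow | apply: (subspaceZ S_subspace)].
have [/Slow //|ge_i_n] := ltnP i n; have -> : i = n by lia.
have -> : p n = \sum_(i < n.+1) t i ^+ 0 *: p i - \sum_(i < n) p i.
  rewrite big_ord_recr /= expr0 scale1r.
  by under eq_bigr do rewrite expr0 scale1r; rewrite addrAC subrr add0r.
apply: (subspaceB S_subspace (Spow 0)); apply: (subspace_sum S_subspace) => j _; exact: Slow.
Qed.

Lemma subspace_moments (c : int -> F) (f : int -> W) (B : nat) :
    injective c -> (forall i, (i < - B%:Z) || (B%:Z < i) -> f i = 0) ->
    (forall m, S (\sum_(n < (B + B).+1) c (n%:Z - B%:Z) ^+ m *: f (n%:Z - B%:Z))) ->
  forall i, S (f i).
Proof.
move=> c_inj f_out Smom i.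
have [/f_out -> | ] := boolP ((i < - B%:Z) || (B%:Z < i)); first exact: subspace0.
rewrite negb_or -!leNgt => /andP [le_Bi le_iB].
have -> : i = (absz (i + B%:Z))%:Z - B%:Z by lia.
apply: (@subspace_vandermonde _ (fun n => c (n%:Z - B%:Z))
          (fun n => f (n%:Z - B%:Z)) _ Smom); last by lia.
by move=> a b _ _ /c_inj; lia.
Qed.

End Vandermonde.

Lemma span_subspace (W : lmodType algC) (A : W -> Prop) : subspace (span_of A).
Proof.
split=> [|a x y [s1 [A_s1 ->]] [s2 [A_s2 ->]]]; first by exists [::]; rewrite big_nil.
exists ([seq (a * p.1, p.2) | p <- s1] ++ s2); split.
  by move=> p; rewrite mem_cat => /orP [/mapP [q /A_s1 ? ->] | /A_s2].
rewrite big_cat big_map scaler_sumr; congr (_ + _).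
by apply: eq_bigr => p _; rewrite scalerA.
Qed.

Lemma span_in (W : lmodType algC) (A : W -> Prop) x : A x -> span_of A x.
Proof.
by move=> Ax; exists [:: (1, x)]; split=> [p /[!inE] /eqP -> | ]; rewrite ?big_seq1 ?scale1r.
Qed.

Lemma span_min (W : lmodType algC) (A S : W -> Prop) : subspace S ->
  (forall x, A x -> S x) -> forall x, span_of A x -> S x.
Proof.
move=> S_subspace AS x [s [As ->]]; rewrite big_seq.
by apply: subspace_sum => // p /As /AS; apply: subspaceZ.
Qed.

Lemma sum_centered_window (W : zmodType) (f : int -> W) (B : nat) :
    (forall i : int, (i < - B%:Z) || (B%:Z < i) -> f i = 0) ->
  forall M, (B <= M)%N ->
  \sum_(i < (M + M).+1) f (i%:Z - M%:Z) = \sum_(i < (B + B).+1) f (i%:Z - B%:Z).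
Proof.
move=> f_out M le_BM; rewrite -(subnKC le_BM).
elim: (M - B)%N => [|d IH]; first by rewrite addn0.
rewrite -IH (_ : (B + d.+1 + (B + d.+1)).+1 = (B + d + (B + d)).+3); last by lia.
rewrite big_ord_recr big_ord_recl /= !f_out ?add0r ?addr0; last 2 first.
- by apply/orP; right; lia.
- by apply/orP; left; lia.
by apply: eq_bigr => i _; congr f; rewrite /bump /=; lia.
Qed.

Definition modes_span (V W : lmodType algC) (YW : V -> int -> W -> W)
    (U : W -> Prop) : W -> Prop :=
  span_of (fun x => exists (v : V) (j : int) (u : W), U u /\ x = YW v j u).

Section TwistedModule.
Variables (V W : lmodType algC) (T : nat) (YW : V -> int -> W -> W).
Hypothesis T_gt0 : (0 < T)%N.

Lemma Pcoef_lead k a a' w i j :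
  Pcoef T YW k a a' w (i + (k * T)%N%:Z) j =
  prodcoef T YW a a' w i j +
  \sum_(l < k) (('C(k, l))%:R * (-1) ^+ (k - l)%N) *:
     prodcoef T YW a a' w (i + (k * T)%N%:Z - (l * T)%N%:Z) (j - ((k - l) * T)%N%:Z).
Proof.
rewrite /Pcoef big_ord_recr /= subnn mul0n binn expr0 mulr1 scale1r subr0 addrC.
by congr (prodcoef _ _ _ _ _ _ _ + _); lia.
Qed.

Lemma prodcoef_subspace (S : W -> Prop) k a a' w :
    subspace S -> bilinear_modes YW ->
    (exists N : int, forall n, N <= n -> YW a' n w = 0) ->
    (forall i j, S (Pcoef T YW k a a' w i j)) ->
  forall i j, S (prodcoef T YW a a' w i j).
Proof.
move=> S_subspace YW_lin [N a'w_trunc] SP.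
(* By [Pcoef_lead], a coefficient is a [Pcoef] minus coefficients of [x2]-degree
   lower by at least [T]; they vanish for low degree by truncation. *)
suff Slow n : forall i j, j <= - N - T%:Z + n%:Z -> S (prodcoef T YW a a' w i j).
  by move=> i j; apply: (Slow (absz (j + N + T%:Z))); lia.
elim: n => [|n IH] i j le_j.
  rewrite /prodcoef /coefW a'w_trunc; last by lia.
  exact: subspace0 (subspace_preim S_subspace (YW_lin.2 a _)).
have /eqP := Pcoef_lead k a a' w i j; rewrite addrC -subr_eq => /eqP <-.
apply: subspaceB => //; apply: subspace_sum => // l _; apply: subspaceZ => //.
apply: IH; have := ltn_ord l; have : (T <= (k - l) * T)%N by rewrite leq_pmull ?subn_gt0.
by lia.
Qed.

Lemma Pcoef_subspace (S : W -> Prop) k a a' w :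
    subspace S ->
    (exists N : int, forall i j, (i < N) || (j < N) -> Pcoef T YW k a a' w i j = 0) ->
    (forall s (m : nat), exists2 x, S x &
       sumsZ (fun i => expcoef T i m *: Pcoef T YW k a a' w i (s - i)) x) ->
  forall i j, S (Pcoef T YW k a a' w i j).
Proof.
move=> S_subspace [N P_trunc] S_moments i j.
have T_neq0 : (T%:R : algC) != 0 by rewrite pnatr_eq0 -lt0n.
pose s := i + j; pose B := (`|N| + `|s - N|)%N.
have -> : j = s - i by rewrite /s; lia.
apply: (subspace_moments S_subspace (B := B) (c := fun i => i%:~R / T%:R)
          (f := fun i => Pcoef T YW k a a' w i (s - i))).
- by move=> x y /(mulIf (invr_neq0 T_neq0)) /intr_inj.
- move=> n /orP out_n; apply/P_trunc/orP; rewrite /B in out_n.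
  by case: out_n => ?; [left | right]; lia.
move=> m; have [x Sx [N' sum_x]] := S_moments s m.
suff -> : \sum_(n < (B + B).+1) ((n%:Z - B%:Z)%:~R / T%:R) ^+ m *:
            Pcoef T YW k a a' w (n%:Z - B%:Z) (s - (n%:Z - B%:Z)) = (m`!)%:R *: x.
  exact: subspaceZ.
have vanish_out n : (n < - B%:Z) || (B%:Z < n) ->
    expcoef T n m *: Pcoef T YW k a a' w n (s - n) = 0.
  move=> /orP out_n; rewrite P_trunc ?scaler0 //; apply/orP; rewrite /B in out_n.
  by case: out_n => ?; [left | right]; lia.
rewrite -(sum_x (maxn N' B) (leq_maxl _ _)) (sum_centered_window vanish_out) ?leq_maxr //.
rewrite scaler_sumr; apply: eq_bigr => n _.
rewrite scalerA /expcoef [_ * (_ / _)]mulrC divfK //.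
by rewrite pnatr_eq0 -lt0n fact_gt0.
Qed.

Lemma modes_comp_span (one : V) (Y : V -> int -> V -> V) (g : V -> V) :
    is_twisted_phi_module one Y g T YW ->
  forall a b a' b' w, modes_span YW (eq w) (YW a b (YW a' b' w)).
Proof.
case=> YW_lin YW_trunc _ _ weak_assoc a b a' b' w.
have span_subspace_w := span_subspace
  (fun x => exists (v : V) (j : int) (u : W), w = u /\ x = YW v j u).
have [k [P_trunc P_moments]] := weak_assoc a a'.
have -> : YW a b (YW a' b' w) = prodcoef T YW a a' w (- b - T%:Z) (- b' - T%:Z).
  by rewrite /prodcoef /coefW; congr YW; [|congr YW]; lia.
apply: (prodcoef_subspace span_subspace_w YW_lin (YW_trunc a' w)).
apply: (Pcoef_subspace span_subspace_w (P_trunc w)) => s m.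
have [x [[N sum_x] moments_x]] := P_moments w s m.
exists x => //; rewrite -(sum_x N (leqnn _)).
apply: (subspace_sum span_subspace_w) => r _; apply/(subspaceZ span_subspace_w)/span_in.
by do 3 eexists; split; last reflexivity.
Qed.

End TwistedModule.

Lemma modes_span_submodule (V W : lmodType algC) (one : V) (Y : V -> int -> V -> V)
    (g : V -> V) (T : nat) (YW : V -> int -> W -> W) (U : W -> Prop) :
    (0 < T)%N -> is_twisted_phi_module one Y g T YW ->
  is_submodule YW (modes_span YW U).
Proof.
move=> T_gt0 HW; have [YW_lin _ _ _ _] := HW.
have span_U := span_subspace
  (fun x => exists (v : V) (j : int) (u : W), U u /\ x = YW v j u).
split=> [|c x y|v j]; [exact: subspace0 span_U | exact: span_U.2 |].
apply: (span_min (subspace_preim span_U (YW_lin.2 v j))) => _ [a [b [u [Uu ->]]]].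
apply: (span_min span_U) (modes_comp_span T_gt0 HW v j a b u) => _ [c [d [_ [<- ->]]]].
by apply: span_in; exists c, d, u.
Qed.

Lemma modes_span_gen (V W : lmodType algC) (one : V) (Y : V -> int -> V -> V)
    (g : V -> V) (T : nat) (YW : V -> int -> W -> W) (U : W -> Prop) :
    is_twisted_phi_module one Y g T YW ->
  forall u, U u -> modes_span YW U u.
Proof.
case=> _ _ vacuum _ _ u Uu; apply: span_in; exists one, (- 0 - T%:Z), u.
by have := vacuum 0 u; rewrite eqxx /coefW => ->.
Qed.

Lemma modes_span_min (V W : lmodType algC) (YW : V -> int -> W -> W) (U S : W -> Prop) :
    is_submodule YW S -> (forall u, U u -> S u) ->
  forall w, modes_span YW U w -> S w.
Proof.
case=> S0 S_lin S_modes US; apply: span_min => [|_ [v [j [u [/US Su ->]]]]].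
  by split.
exact: S_modes.
Qed.

Theorem proposition2p8 (V : lmodType algC) (one : V) (Y : V -> int -> V -> V)
  (HV : is_vertex_algebra one Y)
  (g : V -> V) (T : nat) (HT : (0 < T)%N)
  (Hg : is_VA_automorphism one Y g) (HgT : forall v, iter T g v = v)
  (W : lmodType algC) (YW : V -> int -> W -> W)
  (HW : is_twisted_phi_module one Y g T YW)
  (U : W -> Prop) :
  forall w : W, generated_submodule YW U w <->
    span_of (fun x => exists (v : V) (j : int) (u : W), U u /\ x = YW v j u) w.
Proof.
move=> w; split=> [gen_w | span_w S S_sub US].
  apply: (gen_w (modes_span YW U)) => [|u Uu].
    exact: (modes_span_submodule U HT HW).
  exact: (modes_span_gen HW Uu).
exact: modes_span_min S_sub US w span_w.
Qed.
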